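(* Let $R$ be a finite Frobenius ring, let $\mathrm{soc}(R)$ denote its socle and $\mathrm{rad}(R)$ its Jacobson radical, and let $\psi:\mathrm{soc}(R)\to R/\mathrm{rad}(R)$ be an isomorphism of left $R$-modules. Let $\tilde{\omega}$ be the normalized homogeneous weight on the ring $R/\mathrm{rad}(R)$. Then the normalized homogeneous weight $\omega$ on $R$ is given by \[ \omega(x)=\begin{cases}\tilde{\omega}(\psi(x)), & x\in\mathrm{soc}(R),\\ 1, & x\notin \mathrm{soc}(R).\end{cases} \]
   Context: A finite ring $R$ (with identity) is Frobenius if ${}_R\mathrm{soc}({}_RR)\cong {}_R(R/\mathrm{rad}(R))$ as left $R$-modules (equivalently the right-sided version); for Frobenius rings the left and right socles coincide and are denoted $\mathrm{soc}(R)$. $R/\mathrm{rad}(R)$ is again a finite Frobenius (semisimple) ring. The normalized homogeneous weight on a finite Frobenius ring $R$ is the unique map $\omega:R\to\mathbb{R}$ with $\omega(0)=0$, $\omega(x)=\omega(y)$ whenever $Rx=Ry$, and $\sum_{y\in Rx}\omega(y)=|Rx|$ for every $x\in R\setminus\{0\}$. *)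

From HB Require Import structures.
From mathcomp Require Import all_boot all_order all_algebra.
From mathcomp Require Import reals.
Set Implicit Arguments. Unset Strict Implicit. Unset Printing Implicit Defensive.
Import Order.TTheory GRing.Theory Num.Theory.
Local Open Scope ring_scope.

Section RingNotions.
Variable R : finNzRingType.

Definition lideal (I : {set R}) : bool :=
  [&& (0 : R) \in I,
      [forall x in I, forall y in I, x + y \in I] &
      [forall r : R, forall x in I, r * x \in I]].

Definition lprinc (x : R) : {set R} := [set r * x | r : R].

Definition minimal_lideal (I : {set R}) : bool :=
  [&& lideal I, I != [set 0] &
      [forall J : {set R}, (lideal J && (J \subset I) && (J != [set 0]))
                            ==> (J == I)]].

Definition maximal_lideal (I : {set R}) : bool :=
  [&& lideal I, I != [set: R] &
      [forall J : {set R}, (lideal J && (I \subset J) && (J != [set: R]))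
                            ==> (J == I)]].

Definition rad : {set R} :=
  \bigcap_(I : {set R} | maximal_lideal I) I.

(* (left) socle: the sum of all minimal left ideals, i.e. the smallest
   left ideal containing every minimal left ideal *)
Definition soc : {set R} :=
  \bigcap_(J : {set R} | lideal J &&
        [forall I : {set R}, minimal_lideal I ==> (I \subset J)]) J.

(* [pi : R -> S] presents S as the quotient ring R / rad(R) *)
Definition is_quotient_by_rad (S : finNzRingType) (pi : {rmorphism R -> S})
  : Prop :=
  (forall s : S, exists x : R, pi x = s) /\ (forall x : R, (pi x == 0) = (x \in rad)).

(* psi : soc(R) -> S is an isomorphism of left R-modules, where S = R/rad(R)
   carries the left R-module structure r . s = pi r * s *)
Definition soc_iso (S : finNzRingType) (pi : {rmorphism R -> S})
  (psi : R -> S) : Prop :=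
  [/\ forall x y, x \in soc -> y \in soc -> psi (x + y) = psi x + psi y,
      forall r x, x \in soc -> psi (r * x) = pi r * psi x,
      {in soc &, injective psi} &
      psi @: soc = [set: S]].

(* R is Frobenius: soc(_R R) is isomorphic to R/rad(R) as left R-modules *)
Definition frobenius : Prop :=
  exists (S : finNzRingType) (pi : {rmorphism R -> S}) (psi : R -> S),
    is_quotient_by_rad pi /\ soc_iso pi psi.

Definition is_hom_weight (F : realType) (w : R -> F) : Prop :=
  [/\ w 0 = 0,
      (forall x y, lprinc x = lprinc y -> w x = w y) &
      (forall x, x != 0 -> \sum_(y in lprinc x) w y = (#|lprinc x|)%:R)].

End RingNotions.

(** The weight [omega] below satisfies the three defining properties, so it
    is the homogeneous weight by uniqueness (induction on [#|R x|]).  On the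
    socle, [psi] maps every left ideal [I] bijectively onto a left ideal of
    [R/rad(R)]; that ring is semisimple, so [psi(I)] is generated by an
    idempotent and the weights of its elements add up to [#|I|].  Every
    nonzero [R x] contains a minimal left ideal, hence meets the socle, and
    the elements of [R x] outside the socle contribute [1] each, which makes
    the sum over [R x] equal to [#|R x|] in that case too. *)

From Pilot Require Import Defs.
From HB Require Import structures.
From mathcomp Require Import all_boot all_order all_algebra.
From mathcomp Require Import reals.
Import Order.TTheory GRing.Theory Num.Theory.
Set Implicit Arguments. Unset Strict Implicit. Unset Printing Implicit Defensive.
Local Open Scope ring_scope.

Section LeftIdeals.
Variable R : finNzRingType.
Implicit Types (I J L M : {set R}) (a x y : R).

Lemma lidealP I :
  reflect [/\ 0 \in I, (forall x y, x \in I -> y \in I -> x + y \in I)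
            & (forall r x, x \in I -> r * x \in I)] (lideal I).
Proof.
apply: (iffP and3P) => [[I0 /forallP ID /forallP IM]|[I0 ID IM]]; split=> //.
- by move=> x y xI yI; move/forall_inP/(_ y yI): (implyP (ID x) xI).
- by move=> r x xI; move/forall_inP/(_ x xI): (IM r).
- by apply/forall_inP => x xI; apply/forall_inP => y; apply: ID.
- by apply/forallP => r; apply/forall_inP => x; apply: IM.
Qed.

Lemma lideal0 I : lideal I -> 0 \in I.
Proof. by case/lidealP. Qed.

Lemma lidealD I x y : lideal I -> x \in I -> y \in I -> x + y \in I.
Proof. by case/lidealP=> _ ID _; apply: ID. Qed.

Lemma lidealM I r x : lideal I -> x \in I -> r * x \in I.
Proof. by case/lidealP=> _ _ IM; apply: IM. Qed.

Lemma lidealB I x y : lideal I -> x \in I -> y \in I -> x - y \in I.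
Proof. by move=> lI xI yI; rewrite lidealD // -mulN1r lidealM. Qed.

Lemma lideal_eqT I : lideal I -> (I == [set: R]) = (1 \in I).
Proof.
move=> lI; apply/eqP/idP => [-> | I1]; first by rewrite inE.
by apply/setP => r; rewrite inE -[r]mulr1 lidealM.
Qed.

Lemma lideal_neq0P I :
  lideal I -> reflect (exists2 y, y \in I & y != 0) (I != [set 0]).
Proof.
move=> lI; apply: (iffP idP) => [|[y yI]]; last first.
  by move=> y0; apply/eqP => I0; move: yI; rewrite I0 inE (negbTE y0).
rewrite eqEsubset sub1set lideal0 // andbT => /subsetPn[y yI].
by rewrite inE => y0; exists y.
Qed.

Lemma lideal_bigcap (P : pred {set R}) :
  (forall J, P J -> lideal J) -> lideal (\bigcap_(J | P J) J).
Proof.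
move=> lP; apply/lidealP; split.
- by apply/bigcapP => J /lP /lideal0.
- move=> x y /bigcapP xP /bigcapP yP; apply/bigcapP => J PJ.
  exact: lidealD (lP _ PJ) (xP _ PJ) (yP _ PJ).
- move=> r x /bigcapP xP; apply/bigcapP => J PJ.
  exact: lidealM (lP _ PJ) (xP _ PJ).
Qed.

Lemma lideal_setI I J : lideal I -> lideal J -> lideal (I :&: J).
Proof.
move=> lI lJ; apply/lidealP; split; first by rewrite inE !lideal0.
- by move=> x y /setIP[xI xJ] /setIP[yI yJ]; rewrite inE !lidealD.
- by move=> r x /setIP[xI xJ]; rewrite inE !lidealM.
Qed.

Lemma lideal_annr I a : lideal I -> lideal [set l in I | l * a == 0].
Proof.
move=> lI; apply/lidealP; split; first by rewrite inE lideal0 ?mul0r ?eqxx.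
- move=> x y; rewrite !inE => /andP[xI /eqP xa] /andP[yI /eqP ya].
  by rewrite lidealD // mulrDl xa ya addr0 eqxx.
- by move=> r x; rewrite !inE => /andP[xI /eqP xa]; rewrite lidealM // -mulrA xa mulr0 eqxx.
Qed.

Lemma lprincP x y : reflect (exists r, y = r * x) (y \in lprinc x).
Proof. by apply: (iffP imsetP) => [[r _ ->]|[r ->]]; exists r. Qed.

Lemma lprinc_id x : x \in lprinc x.
Proof. by apply/lprincP; exists 1; rewrite mul1r. Qed.

Lemma lideal_lprinc x : lideal (lprinc x).
Proof.
apply/lidealP; split; first by apply/lprincP; exists 0; rewrite mul0r.
- move=> _ _ /lprincP[r ->] /lprincP[s ->].
  by apply/lprincP; exists (r + s); rewrite mulrDl.
- by move=> r _ /lprincP[s ->]; apply/lprincP; exists (r * s); rewrite mulrA.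
Qed.

Lemma lprinc_subset I x : lideal I -> (lprinc x \subset I) = (x \in I).
Proof.
move=> lI; apply/idP/idP => [/subsetP-> // | xI]; first exact: lprinc_id.
by apply/subsetP => _ /lprincP[r ->]; apply: lidealM.
Qed.

Lemma minimal_lidealP L :
  reflect [/\ lideal L, L != [set 0]
            & forall J, lideal J -> J \subset L -> J != [set 0] -> J = L]
          (minimal_lideal L).
Proof.
apply: (iffP and3P) => [[lL L0 /forallP Lmin]|[lL L0 Lmin]]; split=> //.
  by move=> J lJ JL J0; apply/eqP; move: (Lmin J); rewrite lJ JL J0.
by apply/forallP => J; apply/implyP => /andP[/andP[lJ JL] J0]; apply/eqP; apply: Lmin.
Qed.

Lemma maximal_lidealP M :
  reflect [/\ lideal M, M != [set: R]
            & forall J, lideal J -> M \subset J -> J != [set: R] -> J = M]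
          (maximal_lideal M).
Proof.
apply: (iffP and3P) => [[lM MT /forallP Mmax]|[lM MT Mmax]]; split=> //.
  by move=> J lJ MJ JT; apply/eqP; move: (Mmax J); rewrite lJ MJ JT.
by apply/forallP => J; apply/implyP => /andP[/andP[lJ MJ] JT]; apply/eqP; apply: Mmax.
Qed.

Lemma exists_minimal_lideal I :
  lideal I -> I != [set 0] -> exists2 L, minimal_lideal L & L \subset I.
Proof.
move=> lI I0.
pose P J := [&& lideal J, J \subset I & J != [set 0]].
have PI : P I by rewrite /P lI subxx I0.
case: (arg_minnP (fun J => #|J|) PI) => L /and3P[lL LI L0] Lmin.
exists L => //; apply/minimal_lidealP; split=> // J lJ JL J0.
apply/eqP; rewrite eqEcard JL Lmin //.
by rewrite /P lJ J0 (subset_trans JL LI).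
Qed.

Lemma soc_lideal : lideal (soc R).
Proof. by apply: lideal_bigcap => J /andP[]. Qed.

Lemma minimal_lideal_sub_soc L : minimal_lideal L -> L \subset soc R.
Proof. by move=> mL; apply/bigcapsP => J /andP[_ /forall_inP]; apply. Qed.

Lemma lideal_meet_soc I :
  lideal I -> I != [set 0] -> I :&: soc R != [set 0].
Proof.
move=> lI I0; have [L mL LI] := exists_minimal_lideal lI I0.
have [lL L0 _] := minimal_lidealP _ mL.
have [y yL y0] := lideal_neq0P lL L0.
apply/(lideal_neq0P (lideal_setI lI soc_lideal)); exists y => //.
by rewrite inE (subsetP LI) // (subsetP (minimal_lideal_sub_soc mL)).
Qed.

Lemma lideal_sqr0_sub_rad L :
  lideal L -> (forall a b, a \in L -> b \in L -> a * b = 0) -> L \subset Defs.rad R.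
Proof.
move=> lL L_sqr0; apply/subsetP => l lL'; apply/bigcapP => M.
case/maximal_lidealP=> lM MT Mmax; apply: contraT => lM'.
(* [N = M + R l] strictly contains [M], hence is all of [R]. *)
pose N := [set z | [exists s, z - s * l \in M]].
have lN : lideal N.
  apply/lidealP; split.
  - by rewrite inE; apply/existsP; exists 0; rewrite mul0r subr0 lideal0.
  - move=> x y; rewrite !inE => /existsP[s xM] /existsP[t yM].
    apply/existsP; exists (s + t).
    by rewrite mulrDl opprD addrACA lidealD.
  - move=> r x; rewrite !inE => /existsP[s xM]; apply/existsP; exists (r * s).
    by rewrite -mulrA -mulrBr lidealM.
have MN : M \subset N.
  by apply/subsetP => m mM; rewrite inE; apply/existsP; exists 0; rewrite mul0r subr0.
have lN' : l \in N.
  by rewrite inE; apply/existsP; exists 1; rewrite mul1r subrr lideal0.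
have : 1 \in N.
  rewrite -lideal_eqT //; apply: contraT => NT.
  by rewrite -(Mmax N lN MN NT) lN' in lM'.
rewrite inE => /existsP[s Ms].
(* [l = l (1 - s l) + l (s l)], where the first term lies in [M] and [l (s l) = 0]. *)
have : l * (1 - s * l) + l * (s * l) \in M.
  by rewrite (L_sqr0 l (s * l)) ?lidealM // addr0 lidealM.
by rewrite -mulrDr subrK mulr1 (negbTE lM').
Qed.

End LeftIdeals.

Lemma lideal_imset (R S : finNzRingType) (pi f : R -> S) (I : {set R}) :
    (forall s, exists r, pi r = s) -> lideal I ->
    (forall x y, x \in I -> y \in I -> f (x + y) = f x + f y) ->
    (forall r x, x \in I -> f (r * x) = pi r * f x) ->
  lideal (f @: I).
Proof.
move=> pi_surj lI fD fM; have I0 := lideal0 lI.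
apply/lidealP; split.
- have f0 : f 0 = 0 by apply: (addrI (f 0)); rewrite -fD // !addr0.
  by rewrite -f0 imset_f.
- move=> _ _ /imsetP[x xI ->] /imsetP[y yI ->].
  by rewrite -fD // imset_f // lidealD.
- move=> s _ /imsetP[x xI ->]; have [r <-] := pi_surj s.
  by rewrite -fM // imset_f // lidealM.
Qed.

Section TrivialRadical.
Variable R : finNzRingType.
Hypothesis rad_eq0 : Defs.rad R = [set 0].
Implicit Types (I L : {set R}).

Lemma lideal_idempotent I :
  lideal I -> I != [set 0] -> exists e, [/\ e \in I, e * e = e & e != 0].
Proof.
move=> lI I0; have [L mL LI] := exists_minimal_lideal lI I0.
have [lL L0 Lmin] := minimal_lidealP _ mL.
have /existsP[b /existsP[a /and3P[bL aL ba0]]] :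
    [exists b, exists a, [&& b \in L, a \in L & b * a != 0]].
  apply: contraR L0 => /existsPn L_sqr0.
  rewrite eqEsubset sub1set lideal0 // andbT -rad_eq0.
  apply: lideal_sqr0_sub_rad => // x y xL yL; apply/eqP.
  by move/existsPn/(_ y): (L_sqr0 x); rewrite xL yL negbK.
(* By minimality [L a = L], so [a = e a] for some [e] in [L]; then [e e - e]
   lies in the annihilator of [a] in [L], which is [0] since it misses [b]. *)
have lLa : lideal [set l * a | l in L].
  apply: (lideal_imset (pi := id)) => // [s | x y _ _ | r x _].
  - by exists s.
  - exact: mulrDl.
  - by rewrite mulrA.
have LaL : [set l * a | l in L] = L.
  apply: (Lmin _ lLa).
  - by apply/subsetP => _ /imsetP[y yL ->]; apply: lidealM lL aL.
  - by apply/(lideal_neq0P lLa); exists (b * a); first apply: imset_f.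
have /imsetP[e eL ae] : a \in [set l * a | l in L] by rewrite LaL.
have annr0 : [set l in L | l * a == 0] = [set 0].
  apply/eqP; apply: contraT => K0.
  have KL : [set l in L | l * a == 0] \subset L.
    by apply/subsetP => l; rewrite inE => /andP[].
  move: bL; rewrite -(Lmin _ (lideal_annr a lL) KL K0) inE.
  by rewrite (negbTE ba0) andbF.
have : e * e - e \in [set l in L | l * a == 0].
  by rewrite inE lidealB ?lidealM // mulrBl -mulrA -!ae subrr eqxx.
rewrite annr0 inE subr_eq0 => /eqP ee.
exists e; split=> //; first exact: (subsetP LI).
by apply: contraNneq ba0 => e0; rewrite ae e0 mul0r mulr0.
Qed.

Lemma lideal_idempotent_generated I :
  lideal I -> exists g, g * g = g /\ I = lprinc g.
Proof.
have [n] := ubnP #|I|; elim: n => // n IH in I * => /ltnSE-leIn lI.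
have [-> | I0] := eqVneq I [set 0].
  exists 0; split; first by rewrite mulr0.
  apply/setP => y; rewrite inE; apply/eqP/lprincP => [-> | [r ->]].
    by exists 0; rewrite mulr0.
  by rewrite mulr0.
have [e [eI ee e0]] := lideal_idempotent lI I0.
pose J := [set j in I | j * e == 0].
have JI : J \subset I by apply/subsetP => j; rewrite inE => /andP[].
have ltJn : (#|J| < n)%N.
  rewrite (leq_trans _ leIn) // proper_card // properE JI.
  by apply/subsetPn; exists e; rewrite // inE eI ee (negbTE e0).
have [f [ff Jf]] := IH J ltJn (lideal_annr e lI).
have fe : f * e = 0 by apply/eqP; move: (lprinc_id f); rewrite -Jf inE => /andP[].
pose g := e + f - e * f.
have eg : e * g = e by rewrite /g mulrBr mulrDr mulrA ee addrK.
have fg : f * g = f by rewrite /g mulrBr mulrDr mulrA fe ff mul0r add0r subr0.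
exists g; split; first by rewrite {1}/g mulrBl mulrDl eg fg -mulrA fg.
(* every [j] in [I] splits as [j e + (j - j e)], with [j - j e \in J = R f] *)
apply/setP => j; apply/idP/lprincP => [jI | [r ->]].
  have : j - j * e \in J by rewrite inE lidealB ?lidealM //= mulrBl -mulrA ee subrr.
  rewrite Jf => /lprincP[t jt]; exists (j * e + t * f).
  by rewrite mulrDl -!mulrA eg fg -jt addrC subrK.
have fI : f \in I by rewrite (subsetP JI) // Jf lprinc_id.
by rewrite lidealM // lidealB ?lidealD ?lidealM.
Qed.

End TrivialRadical.

Lemma lideal_preimset (R S : finNzRingType) (pi : {rmorphism R -> S}) (J : {set S}) :
  lideal J -> lideal (pi @^-1: J).
Proof.
move=> lJ; apply/lidealP; split; first by rewrite inE rmorph0 lideal0.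
- by move=> x y; rewrite !inE rmorphD; apply: lidealD.
- by move=> r x; rewrite !inE rmorphM; apply: lidealM.
Qed.

Section QuotientByRadical.
Variables (R S : finNzRingType) (pi : {rmorphism R -> S}).
Hypothesis pi_quot : is_quotient_by_rad pi.

Lemma mem_imset_quotient (M : {set R}) y :
  maximal_lideal M -> (pi y \in pi @: M) = (y \in M).
Proof.
case: pi_quot => _ pi_ker maxM; have radM : Defs.rad R \subset M by apply: bigcap_inf.
have [lM _ _] := maximal_lidealP _ maxM.
apply/imsetP/idP => [[m mM /eqP] | yM]; last by exists y.
rewrite -subr_eq0 -rmorphB pi_ker => /(subsetP radM) ymM.
by rewrite -(subrK m y) lidealD.
Qed.

Lemma maximal_lideal_quotient (M : {set R}) :
  maximal_lideal M -> maximal_lideal (pi @: M).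
Proof.
case: (pi_quot) => pi_surj _ maxM; have piM y := mem_imset_quotient y maxM.
case/maximal_lidealP: maxM => lM MT Mmax.
have lN : lideal (pi @: M).
  apply: (lideal_imset pi_surj lM) => [x y _ _ | r x _].
  - exact: rmorphD.
  - exact: rmorphM.
apply/maximal_lidealP; split=> //.
  by rewrite lideal_eqT // -(rmorph1 pi) piM -lideal_eqT.
move=> J lJ MJ JT; have lJ' := lideal_preimset pi lJ.
have MJ' : M \subset pi @^-1: J.
  by apply/subsetP => m mM; rewrite inE (subsetP MJ) ?imset_f.
have J'T : pi @^-1: J != [set: R].
  by rewrite lideal_eqT // inE rmorph1 -lideal_eqT.
apply/setP => s; have [y <-] := pi_surj s.
by rewrite piM -(Mmax _ lJ' MJ' J'T) inE.
Qed.

Lemma quotient_rad_eq0 : Defs.rad S = [set 0].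
Proof.
case: (pi_quot) => pi_surj pi_ker.
have lrad : lideal (Defs.rad S) by apply: lideal_bigcap => M /maximal_lidealP[].
apply/eqP; rewrite eqEsubset sub1set lideal0 // andbT.
apply/subsetP => s /bigcapP srad; have [x xs] := pi_surj s.
rewrite inE -xs pi_ker; apply/bigcapP => M maxM.
by rewrite -(mem_imset_quotient x maxM) xs srad ?maximal_lideal_quotient.
Qed.

End QuotientByRadical.

Lemma hom_weight_unique (F : realType) (R : finNzRingType) (w v : R -> F) :
  is_hom_weight w -> is_hom_weight v -> w =1 v.
Proof.
case=> w0 w_assoc w_sum [v0 v_assoc v_sum] x.
have [n] := ubnP #|lprinc x|; elim: n => // n IH in x * => /ltnSE-leRxn.
have [-> | x0] := eqVneq x 0; first by rewrite w0 v0.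
pose B := [set y | lprinc y == lprinc x].
have sum_split (u : R -> F) : (forall a b, lprinc a = lprinc b -> u a = u b) ->
    \sum_(y in lprinc x) u y
      = u x *+ #|lprinc x :&: B| + \sum_(y in lprinc x :\: B) u y.
  move=> u_assoc; rewrite (big_setID B) /= -sumr_const; congr (_ + _).
  by apply: eq_bigr => y /setIP[_]; rewrite inE => /eqP/u_assoc.
have sum_smaller : \sum_(y in lprinc x :\: B) w y = \sum_(y in lprinc x :\: B) v y.
  apply: eq_bigr => y /setDP[yx]; rewrite inE => yB; apply: IH.
  rewrite (leq_trans _ leRxn) // proper_card //.
  by rewrite properEneq yB lprinc_subset ?lideal_lprinc.
have := w_sum x x0; rewrite sum_split // sum_smaller -(v_sum x x0) sum_split //.
move/addIr; rewrite -[w x *+ _]mulr_natr -[v x *+ _]mulr_natr => /mulIf; apply.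
rewrite pnatr_eq0 -lt0n; apply/card_gt0P; exists x.
by rewrite !inE lprinc_id eqxx.
Qed.

Section SocleWeight.
Variables (F : realType) (R S : finNzRingType).
Variables (pi : {rmorphism R -> S}) (psi : R -> S) (wt : S -> F).
Hypotheses (pi_quot : is_quotient_by_rad pi) (psi_iso : soc_iso pi psi).
Hypothesis wt_hom : is_hom_weight wt.
Implicit Types (I : {set R}) (x y : R).

Definition socle_weight x : F := if x \in soc R then wt (psi x) else 1.

Lemma psi0 : psi 0 = 0.
Proof.
case: psi_iso => psiD _ _ _; have s0 := lideal0 (soc_lideal R).
by apply: (addrI (psi 0)); rewrite -psiD // !addr0.
Qed.

Lemma lideal_psi_imset I : lideal I -> I \subset soc R -> lideal (psi @: I).
Proof.
case: pi_quot psi_iso => pi_surj _ [psiD psiM _ _] lI /subsetP Isoc.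
apply: (lideal_imset pi_surj lI) => [x y xI yI | r x xI].
- by rewrite psiD ?Isoc.
- by rewrite psiM ?Isoc.
Qed.

Lemma psi_lprinc x : x \in soc R -> psi @: lprinc x = lprinc (psi x).
Proof.
case: pi_quot psi_iso => pi_surj _ [_ psiM _ _] xs.
apply/setP => s; apply/imsetP/lprincP => [[_ /lprincP[r ->] ->] | [t ->]].
  by exists (pi r); rewrite psiM.
have [r <-] := pi_surj t; exists (r * x); last by rewrite psiM.
by apply/lprincP; exists r.
Qed.

Lemma sum_wt_psi I : lideal I -> I \subset soc R -> I != [set 0] ->
  \sum_(y in I) wt (psi y) = #|I|%:R.
Proof.
case: psi_iso wt_hom => _ _ psi_inj _ [_ _ wt_sum] lI Isoc I0.
have injI : {in I &, injective psi}.
  by move=> x y xI yI; apply: psi_inj; rewrite (subsetP Isoc).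
have lJ := lideal_psi_imset lI Isoc.
have J0 : psi @: I != [set 0].
  apply: contraNneq I0 => J0; rewrite eq_sym eqEcard sub1set lideal0 //=.
  by rewrite -(card_in_imset injI) J0 !cards1.
have [g [_ Jg]] := lideal_idempotent_generated (quotient_rad_eq0 pi_quot) lJ.
have g0 : g != 0.
  have [s sJ s0] := lideal_neq0P lJ J0.
  by apply: contraNneq s0 => g0; move: sJ; rewrite Jg g0 => /lprincP[r ->]; rewrite mulr0.
by rewrite -(big_imset _ injI) /= Jg wt_sum // -Jg card_in_imset.
Qed.

Lemma socle_weight_assoc x y :
  lprinc x = lprinc y -> socle_weight x = socle_weight y.
Proof.
case: wt_hom => _ wt_assoc _ Rxy.
have xy_soc : (x \in soc R) = (y \in soc R).
  by rewrite -!(lprinc_subset _ (soc_lideal R)) Rxy.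
rewrite /socle_weight -xy_soc; case: ifP => // xs.
have ys : y \in soc R by rewrite -xy_soc.
by apply: wt_assoc; rewrite -!psi_lprinc // Rxy.
Qed.

Lemma socle_weight_sum x : x != 0 ->
  \sum_(y in lprinc x) socle_weight y = #|lprinc x|%:R.
Proof.
move=> x0; have lx := lideal_lprinc x.
have Rx0 : lprinc x != [set 0] by apply/(lideal_neq0P lx); exists x; rewrite ?lprinc_id.
rewrite (big_setID (soc R)) /= -(cardsID (soc R) (lprinc x)) natrD; congr (_ + _).
  rewrite -sum_wt_psi ?lideal_setI ?soc_lideal ?subsetIr ?lideal_meet_soc //.
  by apply: eq_bigr => y /setIP[_ ys]; rewrite /socle_weight ys.
rewrite -sumr_const; apply: eq_bigr => y /setDP[_ yNs].
by rewrite /socle_weight (negbTE yNs).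
Qed.

Lemma socle_weight_hom : is_hom_weight socle_weight.
Proof.
case: wt_hom => wt0 _ _; split; [|exact: socle_weight_assoc|exact: socle_weight_sum].
by rewrite /socle_weight lideal0 ?soc_lideal // psi0.
Qed.

End SocleWeight.

Theorem theorem2p5 (F : realType) (R : finNzRingType) (S : finNzRingType)
    (pi : {rmorphism R -> S}) (psi : R -> S) (wt : S -> F) :
  frobenius R ->
  is_quotient_by_rad pi ->
  soc_iso pi psi ->
  is_hom_weight wt ->
  let omega := fun x : R => if x \in soc R then wt (psi x) else 1 in
  is_hom_weight omega /\
  (forall w : R -> F, is_hom_weight w -> forall x : R, w x = omega x).
Proof.
(* [frobenius R] is witnessed by [pi] and [psi] themselves, so it adds nothing. *)
move=> _ pi_quot psi_iso wt_hom omega.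
have omega_hom : is_hom_weight omega := socle_weight_hom pi_quot psi_iso wt_hom.
by split=> // w w_hom; apply: hom_weight_unique.
Qed.
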